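(* Let $\tau\in(0,\infty]$ and let $\{(\mathbf{x}_i,\mathbf{v}_i)\}_{i=1}^N$ be a solution on $[0,\tau)$ of the Cucker–Smale model with bonding force $$\dot{\mathbf{x}}_i=\mathbf{v}_i,\qquad \dot{\mathbf{v}}_i=\frac{\kappa_0}{N}\sum_{j=1}^N\psi(\|\mathbf{x}_j-\mathbf{x}_i\|)(\mathbf{v}_j-\mathbf{v}_i)+\frac{\kappa_1}{N}\sum_{j\ne i}\Big\langle\mathbf{v}_j-\mathbf{v}_i,\frac{\mathbf{x}_j-\mathbf{x}_i}{\|\mathbf{x}_j-\mathbf{x}_i\|}\Big\rangle\frac{\mathbf{x}_j-\mathbf{x}_i}{\|\mathbf{x}_j-\mathbf{x}_i\|}+\frac{\kappa_2}{N}\sum_{j\ne i}\big(\|\mathbf{x}_j-\mathbf{x}_i\|-d^\infty_{ij}\big)\frac{\mathbf{x}_j-\mathbf{x}_i}{\|\mathbf{x}_j-\mathbf{x}_i\|}.$$ Then for all $t\in[0,\tau)$, $E(t)+\int_0^tP(s)\,ds=E(0)$, where $$P:=\frac{\kappa_0}{2N}\sum_{i,j=1}^N\psi(\|\mathbf{x}_j-\mathbf{x}_i\|)\|\mathbf{v}_j-\mathbf{v}_i\|^2+\frac{\kappa_1}{2N}\sum_{i\ne j}\Big\langle\mathbf{v}_j-\mathbf{v}_i,\frac{\mathbf{x}_j-\mathbf{x}_i}{\|\mathbf{x}_j-\mathbf{x}_i\|}\Big\rangle^2.$$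
   Context: $N\ge 2$, $d\ge1$, $[N]=\{1,\dots,N\}$; Euclidean norm and inner product on $\mathbb{R}^d$; $\kappa_0,\kappa_1,\kappa_2\ge 0$; $[d^\infty_{ij}]$ real symmetric with zero diagonal; $\psi:[0,\infty)\to[0,\infty)$ bounded and locally Lipschitz. A solution is a $C^1$ family with $\mathbf{x}_i(t)\ne\mathbf{x}_j(t)$ for $i\ne j$ satisfying the system. The total energy is $E:=\frac12\sum_{i=1}^N\|\mathbf{v}_i\|^2+\frac{\kappa_2}{4N}\sum_{i,j=1}^N\big(\|\mathbf{x}_j-\mathbf{x}_i\|-d^\infty_{ij}\big)^2$. *)

From HB Require Import structures.
From mathcomp Require Import all_boot all_order all_algebra.
From mathcomp Require Import all_classical all_reals all_analysis.
Set Implicit Arguments. Unset Strict Implicit. Unset Printing Implicit Defensive.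
Import Order.TTheory GRing.Theory Num.Theory.
Import numFieldNormedType.Exports.
Local Open Scope classical_set_scope.
Local Open Scope ring_scope.

Section CS.
Variables (R : realType) (N d : nat).
Implicit Types (u w : 'rV[R]_d).

Definition edot u w : R := \sum_(k < d) u 0 k * w 0 k.
Definition enorm u : R := Num.sqrt (edot u u).

Definition psi_admissible (psi : R -> R) : Prop :=
  (forall s, 0 <= s -> 0 <= psi s) /\
  (exists M : R, forall s, 0 <= s -> `|psi s| <= M) /\
  (forall a, 0 <= a -> exists r : R, 0 < r /\ exists L : R,
     forall s t, 0 <= s -> 0 <= t -> `|s - a| < r -> `|t - a| < r ->
       `|psi s - psi t| <= L * `|s - t|).

Variables (kap0 kap1 kap2 : R) (psi : R -> R) (dinf : 'I_N -> 'I_N -> R).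

Definition udir (x : 'I_N -> 'rV[R]_d) (i j : 'I_N) : 'rV[R]_d :=
  (enorm (x j - x i))^-1 *: (x j - x i).

Definition cs_rhs (x v : 'I_N -> 'rV[R]_d) (i : 'I_N) : 'rV[R]_d :=
  (kap0 / N%:R) *: (\sum_(j < N) psi (enorm (x j - x i)) *: (v j - v i))
  + (kap1 / N%:R) *: (\sum_(j < N | j != i) edot (v j - v i) (udir x i j) *: udir x i j)
  + (kap2 / N%:R) *: (\sum_(j < N | j != i) (enorm (x j - x i) - dinf i j) *: udir x i j).

Definition cs_energy (x v : 'I_N -> 'rV[R]_d) : R :=
  2^-1 * (\sum_(i < N) enorm (v i) ^+ 2)
  + kap2 / (4 * N%:R) * (\sum_(i < N) \sum_(j < N) (enorm (x j - x i) - dinf i j) ^+ 2).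

Definition cs_dissip (x v : 'I_N -> 'rV[R]_d) : R :=
  kap0 / (2 * N%:R) * (\sum_(i < N) \sum_(j < N) psi (enorm (x j - x i)) * enorm (v j - v i) ^+ 2)
  + kap1 / (2 * N%:R) * (\sum_(i < N) \sum_(j < N | j != i) edot (v j - v i) (udir x i j) ^+ 2).

Definition time_dom (tau : \bar R) : set R := [set t | 0 <= t /\ (t%:E < tau)%E].

Definition cs_solution (tau : \bar R) (x v : 'I_N -> R -> 'rV[R]_d) : Prop :=
  (forall t, t \in time_dom tau -> forall i j, i != j -> x i t != x j t) /\
  (forall i, {within time_dom tau, continuous (x i)}) /\
  (forall i, {within time_dom tau, continuous (v i)}) /\
  (forall t, 0 < t -> (t%:E < tau)%E -> forall i,
     is_derive t 1 (x i) (v i t) /\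
     is_derive t 1 (v i) (cs_rhs (fun j => x j t) (fun j => v j t) i)).

End CS.

(** Multiplying the velocity equation by [v_i] and summing over [i], the power
    [sum_i <v_i, dv_i/dt>] splits into three double sums of the form
    [sum_(i,j) a_ij <v_i, w_ij>] with [a] symmetric and [w] antisymmetric in
    [(i, j)]; exchanging [i] and [j] turns each of them into
    [-1/2 sum_(i,j) a_ij <v_j - v_i, w_ij>].  The Cucker-Smale and the
    alignment sums thereby become [-P], while the bonding sum cancels the time
    derivative of the potential part of [E], because
    [d/dt |x_j - x_i| = <v_j - v_i, (x_j - x_i)/|x_j - x_i|>] for distinct
    particles.  Hence [dE/dt = -P] on [(0, t)], and since [E] and [P] are
    continuous on [[0, t]], the fundamental theorem of calculus gives
    [E(t) + int_0^t P = E(0)]. *)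

From HB Require Import structures.
From mathcomp Require Import all_boot all_order all_algebra.
From mathcomp Require Import all_classical all_reals all_analysis.
From mathcomp Require Import ring.
Import Order.TTheory GRing.Theory Num.Theory.
Import numFieldNormedType.Exports.
Local Open Scope classical_set_scope.
Local Open Scope ring_scope.

Lemma double_sum_sym (R : numFieldType) n (F : 'I_n -> 'I_n -> R) :
  \sum_i \sum_j F i j = 2^-1 * \sum_i \sum_j (F i j + F j i).
Proof.
under [in RHS]eq_bigr do rewrite big_split /=.
rewrite big_split /= [X in _ + X]exchange_big /=.
by field.
Qed.

Section EuclideanInnerProduct.
Context {R : realType} {d : nat}.
Implicit Types (a : R) (u w z : 'rV[R]_d).

Lemma edotC u w : edot u w = edot w u.
Proof. by apply: eq_bigr => k _; rewrite mulrC. Qed.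

Lemma edotDl u w z : edot (u + w) z = edot u z + edot w z.
Proof. by rewrite /edot -big_split; apply: eq_bigr => k _; rewrite mxE mulrDl. Qed.

Lemma edotZl a u w : edot (a *: u) w = a * edot u w.
Proof. by rewrite /edot mulr_sumr; apply: eq_bigr => k _; rewrite mxE mulrA. Qed.

Lemma edotNl u w : edot (- u) w = - edot u w.
Proof. by rewrite -scaleN1r edotZl mulN1r. Qed.

Lemma edotBl u w z : edot (u - w) z = edot u z - edot w z.
Proof. by rewrite edotDl edotNl. Qed.

Lemma edot0l w : edot 0 w = 0.
Proof. by rewrite -(scale0r 0) edotZl mul0r. Qed.

Lemma edotDr u w z : edot z (u + w) = edot z u + edot z w.
Proof. by rewrite edotC edotDl !(edotC z). Qed.

Lemma edotZr a u w : edot w (a *: u) = a * edot w u.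
Proof. by rewrite edotC edotZl edotC. Qed.

Lemma edotNr u w : edot w (- u) = - edot w u.
Proof. by rewrite edotC edotNl edotC. Qed.

Lemma edot0r w : edot w 0 = 0.
Proof. by rewrite edotC edot0l. Qed.

Lemma edot_sumr (I : Type) (r : seq I) (P : pred I) (f : I -> 'rV[R]_d) w :
  edot w (\sum_(j <- r | P j) f j) = \sum_(j <- r | P j) edot w (f j).
Proof.
by rewrite /edot; under eq_bigr do rewrite summxE mulr_sumr; exact: exchange_big.
Qed.

Lemma edot_ge0 u : 0 <= edot u u.
Proof. by apply: sumr_ge0 => k _; rewrite -expr2 sqr_ge0. Qed.

Lemma edot_gt0 u : u != 0 -> 0 < edot u u.
Proof.
move=> u_neq0; rewrite lt_def edot_ge0 andbT; apply: contra u_neq0.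
rewrite /edot psumr_eq0 => [/allP u_eq0|k _]; last by rewrite -expr2 sqr_ge0.
apply/eqP/matrixP => i k; rewrite ord1 mxE.
by have /implyP/(_ isT) := u_eq0 k (mem_index_enum k); rewrite mulf_eq0 orbb => /eqP.
Qed.

Lemma sqr_enorm u : enorm u ^+ 2 = edot u u.
Proof. by rewrite sqr_sqrtr // edot_ge0. Qed.

Lemma enorm_ge0 u : 0 <= enorm u.
Proof. exact: sqrtr_ge0. Qed.

Lemma enorm_gt0 u : u != 0 -> 0 < enorm u.
Proof. by move=> u_neq0; rewrite sqrtr_gt0 edot_gt0. Qed.

Lemma enorm_distC u w : enorm (u - w) = enorm (w - u).
Proof. by rewrite /enorm -opprB edotNl edotNr opprK. Qed.

Lemma sum_edot_antisym {n : nat} {a : 'I_n -> 'I_n -> R}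
    {w : 'I_n -> 'I_n -> 'rV[R]_d} (V : 'I_n -> 'rV[R]_d) :
  (forall i j, a j i = a i j) -> (forall i j, w j i = - w i j) ->
  \sum_i \sum_j a i j * edot (V i) (w i j)
  = - 2^-1 * \sum_i \sum_j a i j * edot (V j - V i) (w i j).
Proof.
move=> a_sym w_anti; rewrite double_sum_sym mulNr -mulrN -sumrN.
congr (_ * _); apply: eq_bigr => i _; rewrite -sumrN; apply: eq_bigr => j _.
by rewrite (a_sym i j) (w_anti i j) edotNr edotBl; ring.
Qed.

End EuclideanInnerProduct.

Section Derivatives.
Context {R : realType} {d : nat}.

Lemma is_derive_fun_sum n (h : 'I_n -> R -> R) (s : R) (dh : 'I_n -> R) :
  (forall i, is_derive s 1 (h i) (dh i)) ->
  is_derive s (1 : R) (fun t => \sum_(i < n) h i t) (\sum_(i < n) dh i).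
Proof. by rewrite -fct_sumE; exact: is_derive_sum. Qed.

Lemma is_derive_rV_coord {f : R -> 'rV[R]_d} {s : R} {df : 'rV[R]_d} (k : 'I_d) :
  is_derive s 1 f df -> is_derive s (1 : R) (fun t => f t 0 k) (df 0 k).
Proof.
move=> [f_derivable <-]; have /derivable_mxP coord_derivable := f_derivable.
by apply: DeriveDef; [exact: coord_derivable | rewrite derive_mx // mxE].
Qed.

Lemma is_derive_edot {f g : R -> 'rV[R]_d} {s : R} {df dg : 'rV[R]_d} :
  is_derive s 1 f df -> is_derive s 1 g dg ->
  is_derive s (1 : R) (fun t => edot (f t) (g t)) (edot df (g s) + edot (f s) dg).
Proof.
move=> f_df g_dg; rewrite /edot; apply: is_derive_eq.
  apply: is_derive_fun_sum => k.
  exact: is_deriveM (is_derive_rV_coord k f_df) (is_derive_rV_coord k g_dg).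
rewrite -big_split; apply: eq_bigr => k _ /=.
by rewrite [RHS]addrC [df 0 k * _]mulrC.
Qed.

Lemma is_derive_enorm {f : R -> 'rV[R]_d} {s : R} {df : 'rV[R]_d} :
  is_derive s 1 f df -> f s != 0 ->
  is_derive s (1 : R) (fun t => enorm (f t)) (edot df ((enorm (f s))^-1 *: f s)).
Proof.
move=> f_df fs_neq0.
have enorm_neq0 : enorm (f s) != 0 by rewrite gt_eqF // enorm_gt0.
apply: is_derive_eq.
  exact: is_derive1_comp (is_derive1_sqrt (edot_gt0 _ fs_neq0)) (is_derive_edot f_df f_df).
by rewrite edotZr (edotC (f s) df) -/(enorm (f s)); field.
Qed.

End Derivatives.

Section CuckerSmale.
Context {R : realType} {N d : nat} (kap0 kap1 kap2 : R) (psi : R -> R)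
  (dinf : 'I_N -> 'I_N -> R).
Hypothesis dinf_sym : forall i j, dinf i j = dinf j i.
Implicit Types (X V : 'I_N -> 'rV[R]_d).

Lemma udir_antisym X i j : udir X j i = - udir X i j.
Proof. by rewrite /udir enorm_distC -scalerN opprB. Qed.

Lemma udir_diag X i : udir X i i = 0.
Proof. by rewrite /udir subrr scaler0. Qed.

Lemma cs_power_balance X V :
  \sum_i edot (V i) (cs_rhs kap0 kap1 kap2 psi dinf X V i)
  + kap2 / (2 * N%:R) * \sum_i \sum_j
      (enorm (X j - X i) - dinf i j) * edot (V j - V i) (udir X i j)
  = - cs_dissip kap0 kap1 psi X V.
Proof.
pose p i j := psi (enorm (X j - X i)).
pose c i j := edot (V j - V i) (udir X i j).
pose b i j := enorm (X j - X i) - dinf i j.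
have p_sym i j : p j i = p i j by rewrite /p enorm_distC.
have c_sym i j : c j i = c i j.
  by rewrite /c udir_antisym -opprB edotNl edotNr opprK.
have b_sym i j : b j i = b i j by rewrite /b enorm_distC dinf_sym.
have dV_anti i j : V i - V j = - (V j - V i) by rewrite opprB.
have drop_diag i (a : 'I_N -> R) :
    \sum_(j | j != i) a j *: udir X i j = \sum_j a j *: udir X i j.
  by rewrite big_rmcond // => j; rewrite negbK => /eqP->; rewrite udir_diag scaler0.
have drop_diag_sqr i : \sum_(j | j != i) c i j ^+ 2 = \sum_j c i j ^+ 2.
  by rewrite big_rmcond // => j; rewrite negbK => /eqP->; rewrite /c udir_diag edot0r expr0n.
have power_split : \sum_i edot (V i) (cs_rhs kap0 kap1 kap2 psi dinf X V i)
    = kap0 / N%:R * \sum_i \sum_j p i j * edot (V i) (V j - V i)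
    + kap1 / N%:R * \sum_i \sum_j c i j * edot (V i) (udir X i j)
    + kap2 / N%:R * \sum_i \sum_j b i j * edot (V i) (udir X i j).
  rewrite !mulr_sumr -!big_split; apply: eq_bigr => i _.
  rewrite /cs_rhs !drop_diag !edotDr !edotZr !edot_sumr.
  by congr (_ * _ + _ * _ + _ * _); apply: eq_bigr => j _; rewrite edotZr.
rewrite power_split (sum_edot_antisym V p_sym dV_anti).
rewrite (sum_edot_antisym V c_sym (udir_antisym X)).
rewrite (sum_edot_antisym V b_sym (udir_antisym X)) /cs_dissip.
under [X in _ = - (_ + _ * X)]eq_bigr do rewrite drop_diag_sqr.
under [X in _ = - (_ * X + _)]eq_bigr do under eq_bigr do rewrite sqr_enorm.
by rewrite !invfM; ring.
Qed.

Lemma is_derive_pair_dist {x v : 'I_N -> R -> 'rV[R]_d} {s : R} {i j : 'I_N} :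
  is_derive s 1 (x i) (v i s) -> is_derive s 1 (x j) (v j s) ->
  (i != j -> x i s != x j s) ->
  is_derive s (1 : R) (fun t => enorm (x j t - x i t))
    (edot (v j s - v i s) (udir (x^~ s) i j)).
Proof.
move=> x_vi x_vj; have [<- _|_ /(_ isT) xs_neq] := eqVneq i j.
  under eq_fun do rewrite subrr.
  by rewrite subrr edot0l; exact: is_derive_cst.
apply: is_derive_enorm (is_deriveB x_vj x_vi) _.
by rewrite subr_eq0 eq_sym xs_neq.
Qed.

Lemma is_derive_cs_energy (x v : 'I_N -> R -> 'rV[R]_d) (s : R) :
  (forall i j, i != j -> x i s != x j s) ->
  (forall i, is_derive s 1 (x i) (v i s)) ->
  (forall i, is_derive s 1 (v i) (cs_rhs kap0 kap1 kap2 psi dinf (x^~ s) (v^~ s) i)) ->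
  is_derive s (1 : R) (fun t => cs_energy kap2 dinf (x^~ t) (v^~ t))
    (- cs_dissip kap0 kap1 psi (x^~ s) (v^~ s)).
Proof.
move=> xs_neq x_v v_rhs.
have -> : (fun t => cs_energy kap2 dinf (x^~ t) (v^~ t)) = fun t =>
    2^-1 * \sum_i edot (v i t) (v i t)
    + kap2 / (4 * N%:R) * \sum_i \sum_j (enorm (x j t - x i t) - dinf i j) ^+ 2.
  by apply/funext => t; rewrite /cs_energy; under eq_bigr do rewrite sqr_enorm.
apply: is_derive_eq.
  apply: is_deriveD; apply: is_deriveZ; apply: is_derive_fun_sum => i.
    exact: is_derive_edot.
  apply: is_derive_fun_sum => j.
  have bond_ij := is_deriveB (is_derive_pair_dist (x_v i) (x_v j) (xs_neq i j))
    (is_derive_cst (dinf i j) s 1).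
  exact: (is_deriveM bond_ij bond_ij).
have scaleE (a b : R) : a *: b = a * b by [].
rewrite -cs_power_balance /= !scaleE.
under eq_bigr do rewrite edotC.
under [X in _ + _ * X]eq_bigr do under eq_bigr do rewrite subr0.
under [X in _ + _ * X]eq_bigr do rewrite big_split.
rewrite !big_split /=.
(* Naming [N%:R^-1] keeps [field] from requiring [N%:R != 0]. *)
rewrite !invfM; set M := N%:R^-1.
by field.
Qed.

End CuckerSmale.

Section Convergence.
Context {R : realType} {T : Type} {F : set_system T} {FF : Filter F}.

Lemma cvg_sum (I : Type) (r : seq I) (P : pred I) (h : I -> T -> R) (l : I -> R) :
  (forall i, P i -> h i @ F --> l i) ->
  \sum_(i <- r | P i) h i t @[t --> F] --> \sum_(i <- r | P i) l i.
Proof. by move=> hl; apply: (cvg_big add_continuous FF). Qed.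

Lemma cvg_sqr (f : T -> R) (a : R) : f @ F --> a -> f t ^+ 2 @[t --> F] --> a ^+ 2.
Proof. by move=> fa; apply: cvgM. Qed.

Lemma cvg_rV_coord {d} (f : T -> 'rV[R]_d) (a : 'rV[R]_d) k :
  f @ F --> a -> f t 0 k @[t --> F] --> a 0 k.
Proof. by move=> fa; exact: (continuous_cvg FF (@coord_continuous R 1 d 0 k a) fa). Qed.

Lemma cvg_edot {d} {f g : T -> 'rV[R]_d} {a b : 'rV[R]_d} :
  f @ F --> a -> g @ F --> b -> edot (f t) (g t) @[t --> F] --> edot a b.
Proof. by move=> fa gb; apply: cvg_sum => k _; apply: cvgM; apply: cvg_rV_coord. Qed.

Lemma cvg_enorm {d} (f : T -> 'rV[R]_d) (a : 'rV[R]_d) :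
  f @ F --> a -> enorm (f t) @[t --> F] --> enorm a.
Proof.
by move=> fa; exact: (continuous_cvg FF (@sqrt_continuous R _) (cvg_edot fa fa)).
Qed.

Lemma cvg_psi_admissible {psi : R -> R} {f : T -> R} {a : R} :
  psi_admissible psi -> f @ F --> a -> (forall t, 0 <= f t) -> 0 <= a ->
  psi (f t) @[t --> F] --> psi a.
Proof.
move=> [_ [_ psi_lip]] fa f_ge0 a_ge0; have [r [r_gt0 [L psi_L]]] := psi_lip a a_ge0.
apply/cvgrPdist_lt => e e_gt0.
have L1_gt0 : 0 < `|L| + 1 by rewrite ltr_wpDl.
have /cvgrPdist_lt/(_ (Num.min r (e / (`|L| + 1)))) := fa.
rewrite lt_min r_gt0 divr_gt0 // => /(_ isT); apply: filterS => t.
rewrite lt_min => /andP[at_r at_e].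
have := psi_L a (f t) a_ge0 (f_ge0 t); rewrite subrr normr0 distrC => /(_ r_gt0 at_r).
move/le_lt_trans; apply; apply: (@le_lt_trans _ _ ((`|L| + 1) * `|a - f t|)).
  by rewrite distrC ler_wpM2r // (le_trans (ler_norm L)) // lerDl.
by rewrite mulrC -ltr_pdivlMr.
Qed.

End Convergence.

Section ContinuityAlongSolutions.
Context {R : realType} {N d : nat} (kap0 kap1 kap2 : R) (psi : R -> R)
  (dinf : 'I_N -> 'I_N -> R) (A : set R) (x v : 'I_N -> R -> 'rV[R]_d).
Hypothesis x_cont : forall i, {within A, continuous (x i)}.
Hypothesis v_cont : forall i, {within A, continuous (v i)}.

Let state_cvg s : A s ->
  (forall i, x i @ within A (nbhs s) --> x i s) /\
  (forall i, v i @ within A (nbhs s) --> v i s).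
Proof.
by move=> As; split=> i; [move/subspace_continuousP: (x_cont i) |
  move/subspace_continuousP: (v_cont i)] => /(_ s As).
Qed.

Lemma continuous_cs_energy :
  {within A, continuous (fun t => cs_energy kap2 dinf (x^~ t) (v^~ t))}.
Proof.
apply/subspace_continuousP => s /state_cvg[x_cvg v_cvg].
apply: cvgD; (apply: cvgM; first exact: cvg_cst); apply: cvg_sum => i _.
  by apply: cvg_sqr; apply: cvg_enorm.
apply: cvg_sum => j _; apply: cvg_sqr; apply: cvgB; last exact: cvg_cst.
by apply: cvg_enorm; apply: cvgB.
Qed.

Hypothesis psi_adm : psi_admissible psi.
Hypothesis x_neq : forall s, A s -> forall i j, i != j -> x i s != x j s.

Lemma continuous_cs_dissip :
  {within A, continuous (fun t => cs_dissip kap0 kap1 psi (x^~ t) (v^~ t))}.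
Proof.
apply/subspace_continuousP => s As; have [x_cvg v_cvg] := state_cvg s As.
have dx_cvg i j : enorm (x j t - x i t) @[t --> within A (nbhs s)]
    --> enorm (x j s - x i s) by apply: cvg_enorm; apply: cvgB.
apply: cvgD; (apply: cvgM; first exact: cvg_cst); apply: cvg_sum => i _;
  apply: cvg_sum => j j_neq_i.
  apply: cvgM; last by apply: cvg_sqr; apply: cvg_enorm; apply: cvgB.
  by apply: cvg_psi_admissible psi_adm (dx_cvg i j) _ (enorm_ge0 _) => t; exact: enorm_ge0.
have xs_neq : enorm (x j s - x i s) != 0.
  by rewrite gt_eqF // enorm_gt0 // subr_eq0 eq_sym x_neq // eq_sym.
apply: cvg_sqr; apply: cvg_edot; first exact: cvgB.
by apply: cvgZ; [exact: cvgV xs_neq (dx_cvg i j) | exact: cvgB].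
Qed.

End ContinuityAlongSolutions.

Lemma continuous_FTC2_balance (R : realType) (a b : R) (E P : R -> R) :
  a < b -> {within `[a, b], continuous E} -> {within `[a, b], continuous P} ->
  (forall s, a < s < b -> is_derive s 1 E (- P s)) ->
  ((E b)%:E + \int[lebesgue_measure]_(s in `[a, b]) (P s)%:E = (E a)%:E)%E.
Proof.
move=> ab E_cont P_cont E_P.
have [_ Ea Eb] := (continuous_within_itvP _ ab).1 E_cont.
have E_derivable : derivable_oo_LRcontinuous (fun s => - E s) a b.
  split; [|exact: cvgN Ea|exact: cvgN Eb].
  by move=> s; rewrite in_itv /= => /E_P/is_deriveN [].
rewrite (continuous_FTC2 ab P_cont E_derivable); last first.
  move=> s; rewrite in_itv /= => /E_P/is_deriveN [_ E'P].
  by rewrite derive1E E'P opprK.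
by rewrite -EFinB -EFinD; congr EFin; ring.
Qed.

Theorem proposition2p3 (R : realType) (N d : nat) (kap0 kap1 kap2 : R)
  (psi : R -> R) (dinf : 'I_N -> 'I_N -> R) (tau : \bar R)
  (x v : 'I_N -> R -> 'rV[R]_d) :
  (2 <= N)%N -> (1 <= d)%N ->
  0 <= kap0 -> 0 <= kap1 -> 0 <= kap2 ->
  (forall i j, dinf i j = dinf j i) -> (forall i, dinf i i = 0) ->
  psi_admissible psi ->
  (0 < tau)%E ->
  cs_solution kap0 kap1 kap2 psi dinf tau x v ->
  forall t, 0 <= t -> (t%:E < tau)%E ->
    ((cs_energy kap2 dinf (fun i => x i t) (fun i => v i t))%:E
     + \int[lebesgue_measure]_(s in `[0%R, t]%classic)
         (cs_dissip kap0 kap1 psi (fun i => x i s) (fun i => v i s))%:E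
     = (cs_energy kap2 dinf (fun i => x i 0) (fun i => v i 0))%:E)%E.
Proof.
move=> _ _ _ _ _ dinf_sym _ psi_adm _ [x_neq [x_cont [v_cont x_v_deriv]]] t.
rewrite le_eqVlt => /predU1P[<- _|t_gt0 t_lt_tau].
  by rewrite set_itv1 integral_set1 adde0.
have sub_dom : `[0, t] `<=` time_dom tau.
  move=> s /=; rewrite in_itv /= => /andP[s_ge0 s_le_t]; split => //.
  by rewrite (le_lt_trans _ t_lt_tau) // lee_fin.
have x_cont_itv i := continuous_subspaceW sub_dom (x_cont i).
have v_cont_itv i := continuous_subspaceW sub_dom (v_cont i).
apply: (@continuous_FTC2_balance R 0 t
  (fun s => cs_energy kap2 dinf (x^~ s) (v^~ s))
  (fun s => cs_dissip kap0 kap1 psi (x^~ s) (v^~ s)) t_gt0).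
- exact: continuous_cs_energy.
- apply: continuous_cs_dissip => // s s_in; apply: x_neq; rewrite inE; exact: sub_dom.
- move=> s /andP[s_gt0 s_lt_t].
  have s_lt_tau : (s%:E < tau)%E by rewrite (lt_trans _ t_lt_tau) // lte_fin.
  have s_dom : s \in time_dom tau by rewrite inE; split; [exact: ltW|].
  apply: is_derive_cs_energy => //; first exact: x_neq s_dom.
  + by move=> i; case: (x_v_deriv s s_gt0 s_lt_tau i).
  + by move=> i; case: (x_v_deriv s s_gt0 s_lt_tau i).
Qed.
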